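(* Let $n$ be a positive integer and suppose $c_n<1$. Then for every profinite group $G$ such that $X_n(G)=\{x\in G : x^n=1\}$ has positive Haar measure, there exist an open subgroup $H$ of $G$ and an element $t\in G$ such that every element of the coset $tH$ has order dividing $n$.
   Context: Haar measure means normalized Haar measure. For a group $K$ and an automorphism $\phi$ of $K$ whose order divides $n$, writing $x^\phi$ for the image of $x$, set $X_{n,\phi}(K):=\{x\in K : x x^{\phi} x^{\phi^2}\cdots x^{\phi^{n-1}}=1\}$. Define $$c_n:=\sup\left(\left\{\frac{|X_{n,\phi}(H)|}{|H|} : H \text{ a finite group},\ \phi\in \mathrm{Aut}(H),\ \phi^n=\mathrm{id}\right\}\setminus\{1\}\right).$$ *)

From HB Require Import structures.
From mathcomp Require Import all_boot all_order all_algebra all_fingroup.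
From mathcomp Require Import all_classical all_reals all_analysis.

Set Implicit Arguments.
Unset Strict Implicit.
Unset Printing Implicit Defensive.

Import Order.TTheory GRing.Theory Num.Theory.

(* A type carrying both a (possibly infinite) group structure and a
   (pointed) topology.  The compatibility and profiniteness conditions are
   stated separately in [profinite_group]. *)
#[short(type="groupTopType")]
HB.structure Definition GroupTop := {G of monoid.Group G & PointedTopological G}.

Local Open Scope classical_set_scope.

Section Profinite.
Variable G : groupTopType.
Local Open Scope group_scope.

Definition topological_group : Prop :=
  continuous (fun p : G * G => p.1 * p.2) /\ continuous (fun x : G => x^-1).

Definition profinite_group : Prop :=
  [/\ topological_group, compact [set: G], hausdorff_space G
    & totally_disconnected [set: G]].

Definition is_subgroup (H : set G) : Prop :=
  [/\ H 1, (forall x y, H x -> H y -> H (x * y)) & (forall x, H x -> H x^-1)].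

Definition open_subgroup (H : set G) : Prop := is_subgroup H /\ open H.

Definition Xn (n : nat) : set G := [set x | x ^+ n = 1].

End Profinite.

Notation borelG G := (g_sigma_algebraType (@open G)).

Local Open Scope ereal_scope.

(* Normalized Haar measure on a compact group: a Borel probability measure,
   left invariant, outer regular on Borel sets and inner regular on open
   sets (i.e. a left-invariant Radon probability measure). *)
Definition normalized_haar_measure (R : realType) (G : groupTopType)
  (mu : measure (borelG G) R) : Prop :=
  [/\ mu [set: borelG G] = 1,
      (forall (g : G) (A : set (borelG G)), measurable A ->
         mu [set (g * x)%g | x in A] = mu A),
      (forall A : set (borelG G), measurable A ->
         mu A = ereal_inf [set mu U | U in [set U : set G | open U /\ A `<=` U]])
    & (forall U : set G, open U ->
         mu U = ereal_sup [set mu K | K in [set K : set G | compact K /\ K `<=` U]])].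

Local Close Scope ereal_scope.

Definition Xnphi (gT : finGroupType) (n : nat) (phi : {perm gT}) : {set gT} :=
  [set x : gT | (\prod_(i < n) (phi ^+ i)%g x)%g == 1%g].

Definition cn_ratios (R : realType) (n : nat) : set R :=
  [set r : R | exists (gT : finGroupType) (phi : {perm gT}),
     [/\ phi \in Aut (setTfor gT), (phi ^+ n)%g = 1%g
       & r = (#|Xnphi n phi|%:R / #|gT|%:R)%R]] `\` [set 1%R].

Definition c_n (R : realType) (n : nat) : R := reals.sup (@cn_ratios R n).

From HB Require Import structures.
From mathcomp Require Import all_boot all_order all_algebra all_fingroup.
From mathcomp Require Import all_classical all_reals all_analysis.
From mathcomp Require Import lra.
From mathcomp Require finmap.

Set Implicit Arguments.
Unset Strict Implicit.
Unset Printing Implicit Defensive.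

Import Order.TTheory GRing.Theory Num.Theory.
Local Open Scope classical_set_scope.

(* Choose c with c_n <= c < 1, 0 < c.  Outer regularity of the Haar measure mu
   gives an open U containing X := X_n(G) with c mu(U) < mu(X), and, X being
   compact, an open normal subgroup N with X N contained in U (open subgroups
   form a basis at 1 because a compact Hausdorff totally disconnected space has
   a basis of clopen sets).  Counting the cosets of N that meet X yields t in X
   with mu(X ∩ tN) > c mu(N).
   Suppose (th)^n <> 1 for some h in N, and pick an open normal M <= N avoiding
   (th)^n.  In the finite group N/M let phi be conjugation by t^-1; phi^n = 1
   as t^n = 1.  The identity (gt)^n = g g^(t^-1) ... g^(t^-(n-1)) t^n shows
   that gM lies in X_{n,phi}(N/M) iff (gt)^n lies in M, so comparing Haar
   measures |X_{n,phi}(N/M)| / |N/M| > c >= c_n.  By definition of c_n this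
   ratio is 1, hence (gt)^n lies in M for all g in N; g := t h t^-1 gives the
   contradiction. *)

Section QuasiComponent.
Variable T : topologicalType.
Hypothesis cT : compact [set: T].

Definition quasi_component (x : T) : set T :=
  \bigcap_(C in [set C : set T | clopen C /\ C x]) C.

Lemma quasi_component_refl x : quasi_component x x.
Proof. by move=> C []. Qed.

Lemma quasi_component_closed x : closed (quasi_component x).
Proof. by apply: closed_bigI => C [[]]. Qed.

Lemma clopen_sub_open_quasi_component x (U : set T) :
  open U -> quasi_component x `<=` U -> exists C, [/\ clopen C, C x & C `<=` U].
Proof.
move=> oU QU.
have cK : compact (~` U) by apply: (subclosed_compact _ cT) => //; exact: open_closedC.
pose F := filter_from [set C : set T | clopen C /\ C x]
                      (fun C => [set C' : set T | C' `<=` C]).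
have FF : Filter F.
  apply: filter_from_filter; first by exists setT; split => //; exact: clopenT.
  move=> A B [cA Ax] [cB Bx]; exists (A `&` B); first by split; [exact: clopenI|].
  by move=> C /= CAB; split => z /CAB [].
have /compact_near_coveringP /(_ _ F (fun C z => ~ C z) FF) := cK.
case=> [z nUz|C [cC Cx] CnU]; last first.
  exists C; split => // z Cz; apply: contrapT => nUz.
  exact: CnU C (@subset_refl _ C) z nUz Cz.
have [C [cC Cx] nCz] : exists2 C, clopen C /\ C x & ~ C z.
  apply: contrapT => hz; apply/nUz/QU => C hC.
  by apply: contrapT => nCz; apply: hz; exists C.
exists (~` C, [set C' : set T | C' `<=` C]) => /=.
  split; last by exists C.
  by apply: open_nbhs_nbhs; split => //; apply: closed_openC; case: cC.
by move=> [z' C'] [/= nCz' C'C] /C'C.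
Qed.

Lemma quasi_component_sub_open_union x (U W : set T) :
  open U -> open W -> U `&` W = set0 -> quasi_component x `<=` U `|` W -> U x ->
  quasi_component x `<=` U.
Proof.
move=> oU oW UW QUW Ux.
have [C [[oC clC] Cx CUW]] := clopen_sub_open_quasi_component (openU oU oW) QUW.
have CU_clopen : clopen (C `&` U).
  split; first exact: openI.
  suff -> : C `&` U = C `&` ~` W by apply: closedI => //; exact: open_closedC.
  apply/seteqP; split => z [Cz Uz]; split => //.
    by move=> Wz; have : (U `&` W) z by []; rewrite UW.
  by case: (CUW z Cz).
by move=> z Qz; have [] := Qz _ (conj CU_clopen (conj Cx Ux)).
Qed.

Hypothesis hT : hausdorff_space T.

Lemma separate_closed (A B : set T) : closed A -> closed B -> A `&` B = set0 ->
  exists U W, [/\ open U, open W, A `<=` U, B `<=` W & U `&` W = set0].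
Proof.
move=> clA clB AB.
have nBA : set_nbhs A (~` B).
  apply/set_nbhsP; exists (~` B); split => //; first exact: closed_openC.
  by move=> z Az Bz; have : (A `&` B) z by []; rewrite AB.
have [V /set_nbhsP [U [oU AU UV]] VB] := compact_normal hT cT clA nBA.
exists U, (~` closure V); split => //.
- exact/closed_openC/closed_closure.
- by move=> z Bz /VB.
- by apply/disjoints_subset => z /UV /subset_closure; rewrite setCK.
Qed.

Lemma quasi_component_connected x : connected (quasi_component x).
Proof.
move=> B [b Bb] [C oC BQC] [D clD BQD].
have clB : closed B by rewrite BQD; apply: closedI => //; exact: quasi_component_closed.
have clB' : closed (quasi_component x `&` ~` C).
  by apply: closedI; [exact: quasi_component_closed | exact: open_closedC].
have BB' : B `&` (quasi_component x `&` ~` C) = set0.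
  by apply/seteqP; split => // z [+ [_ nCz]]; rewrite BQC => -[].
have [U [W [oU oW BU B'W UW]]] := separate_closed clB clB' BB'.
have QUW : quasi_component x `<=` U `|` W.
  move=> z Qz; have [Cz|nCz] := pselect (C z); last by right; apply: B'W.
  by left; apply: BU; rewrite BQC.
have [Ux|nUx] := pselect (U x).
  have QU := quasi_component_sub_open_union oU oW UW QUW Ux.
  apply/seteqP; split => [z|z Qz]; first by rewrite BQC => -[].
  rewrite BQC; split => //; apply: contrapT => nCz.
  have : (U `&` W) z by split; [exact: QU | apply: B'W].
  by rewrite UW.
have Wx : W x by case: (QUW x (@quasi_component_refl x)) => // /nUx.
have WU : W `&` U = set0 by rewrite setIC.
have QW : quasi_component x `<=` W.
  apply: quasi_component_sub_open_union oW oU WU _ Wx.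
  by move=> z /QUW [?|?]; [right | left].
have : (U `&` W) b by split; [exact: BU | apply: QW; move: Bb; rewrite BQC => -[]].
by rewrite UW.
Qed.

Lemma totally_disconnected_quasi_component x :
  totally_disconnected [set: T] -> quasi_component x = [set x].
Proof.
move=> tdT; apply/seteqP; split => [y Qxy|_ ->]; last exact: quasi_component_refl.
have : connected_component [set: T] x y.
  exists (quasi_component x) => //.
  by split; [exact: quasi_component_refl | by [] | exact: quasi_component_connected].
by rewrite tdT.
Qed.

Lemma clopen_nbhs_sub (x : T) (V : set T) : totally_disconnected [set: T] ->
  open V -> V x -> exists C, [/\ clopen C, C x & C `<=` V].
Proof.
move=> tdT oV Vx; apply: clopen_sub_open_quasi_component => //.
by rewrite totally_disconnected_quasi_component // => _ ->.
Qed.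

End QuasiComponent.

Lemma compact_tube (X Y Z : topologicalType) (f : X -> Y -> Z) (K : set X) (y0 : Y)
    (U : set Z) :
  continuous (fun p : X * Y => f p.1 p.2) -> compact K -> open U ->
  (forall x, K x -> U (f x y0)) ->
  exists V, [/\ open V, V y0 & forall x y, K x -> V y -> U (f x y)].
Proof.
move=> cf /compact_near_coveringP cK oU KU.
have : \forall y \near y0, K `<=` (fun x => U (f x y)).
  apply: cK => x Kx.
  have /(cf (x, y0)) // : nbhs (f x y0) U.
  by apply: open_nbhs_nbhs; split => //; exact: KU.
rewrite /prop_near1 nbhsE => -[V [oV Vy0] VU].
by exists V; split => // x y Kx Vy; exact: VU.
Qed.

Section Cosets.
Variable G : groupTopType.
Local Open Scope group_scope.

Definition left_coset (H : set G) (a : G) : set G := [set y | H (a^-1 * y)].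

Definition normal_subgroup (N : set G) : Prop :=
  is_subgroup N /\ forall g y, N g -> N (g ^ y).

Variable H : set G.
Hypothesis sH : is_subgroup H.

Lemma subgroup1 : H 1.
Proof. by case: sH. Qed.

Lemma subgroupM x y : H x -> H y -> H (x * y).
Proof. by case: sH => _ + _; apply. Qed.

Lemma subgroupV x : H x -> H x^-1.
Proof. by case: sH => _ _; apply. Qed.

Lemma left_coset_refl a : left_coset H a a.
Proof. by case: sH; rewrite /left_coset /= mulVg. Qed.

Lemma left_coset_sym a b : left_coset H a b -> left_coset H b a.
Proof. by case: sH => _ _ HV /HV; rewrite /left_coset /= invgM invgK. Qed.

Lemma left_coset_trans a b c :
  left_coset H a b -> left_coset H b c -> left_coset H a c.
Proof.
by case: sH => _ HM _ Hab /(HM _ _ Hab); rewrite /left_coset /= mulgA mulgK.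
Qed.

Lemma left_coset_eq a b : left_coset H a b -> left_coset H a = left_coset H b.
Proof.
move=> Hab; apply/seteqP; split => c; first exact/left_coset_trans/left_coset_sym.
exact: left_coset_trans.
Qed.

Lemma left_coset_mull g a b : left_coset H (g * a) (g * b) = left_coset H a b.
Proof. by rewrite /left_coset /= invgM -mulgA mulKg. Qed.

Definition left_transversal k (r : 'I_k -> G) : Prop :=
  (forall g, exists i, left_coset H (r i) g) /\
  (forall i j, left_coset H (r i) (r j) -> i = j).

Lemma left_transversal_disjoint k (r : 'I_k -> G) :
  left_transversal r -> trivIset setT (fun i => left_coset H (r i)).
Proof.
move=> [_ runiq] i j _ _ [y [Hiy Hjy]]; apply: runiq.
exact: left_coset_trans Hiy (left_coset_sym Hjy).
Qed.

Lemma left_transversal_mulr k (r : 'I_k -> G) t :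
  (forall g y, H g -> H (g ^ y)) -> left_transversal r ->
  left_transversal (fun i => r i * t).
Proof.
move=> nH [rcov runiq]; split => [g|i j].
  have [i Hig] := rcov (g * t^-1); exists i.
  by move: (nH _ t Hig); rewrite /left_coset /= conjgE invgM !mulgA mulgVK.
move=> Hij; apply: runiq; move: (nH _ t^-1 Hij).
by rewrite /left_coset /= conjgE invgK invgM !mulgA mulgV mul1g mulgK.
Qed.

Lemma left_transversal_of_cover (s : seq G) :
  (forall g, exists2 a, a \in s & left_coset H a g) ->
  exists k (r : 'I_k -> G), left_transversal r.
Proof.
move=> scov.
pose cr g := nth 1 s (find (fun a => `[< left_coset H g a >]) s).
have cr_coset g : left_coset H g (cr g).
  have [a sa Hag] := scov g.
  have hs : has (fun a => `[< left_coset H g a >]) s.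
    by apply/hasP; exists a => //; apply/asboolP/left_coset_sym.
  exact/asboolP/(nth_find 1 hs).
have cr_eq g h : left_coset H g h -> cr g = cr h.
  by move=> /left_coset_eq Egh; rewrite /cr Egh.
pose t := undup (map cr s).
have t_cr (l : 'I_(size t)) : nth 1 t l = cr (nth 1 t l).
  have /mapP [a _ ->] : nth 1 t l \in map cr s by rewrite -mem_undup mem_nth.
  exact: cr_eq (cr_coset a).
exists (size t), (fun i => nth 1 t i); split.
- move=> g; have [a sa Hag] := scov g.
  have tg : cr g \in t by rewrite mem_undup -(cr_eq _ _ Hag); apply: map_f.
  have ig : (index (cr g) t < size t)%N by rewrite index_mem.
  by exists (Ordinal ig); rewrite /= nth_index //; exact/left_coset_sym/cr_coset.
- move=> i j Hij; apply/val_inj/eqP.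
  rewrite -(nth_uniq 1 (ltn_ord i) (ltn_ord j) (undup_uniq _)).
  by rewrite t_cr [nth 1 t j]t_cr (cr_eq _ _ Hij).
Qed.

End Cosets.

Section TopologicalGroup.
Variable G : groupTopType.
Hypothesis hmul : continuous (fun p : G * G => (p.1 * p.2)%g).
Hypothesis hinv : continuous (fun x : G => x^-1%g).
Local Open Scope group_scope.

Lemma continuous_mulg (T : topologicalType) (f g : T -> G) :
  continuous f -> continuous g -> continuous (fun x => f x * g x).
Proof.
move=> cf cg x.
apply: (@continuous2_cvg _ _ _ _ _ _ f g (fun a b => a * b)); last 2 first.
- exact: cf.
- exact: cg.
- exact (@hmul (f x, g x)).
Qed.

Lemma continuous_expg n : continuous (fun x : G => x ^+ n).
Proof.
elim: n => [|n IH]; first exact: cst_continuous.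
have -> : (fun x : G => x ^+ n.+1) = (fun x => x * x ^+ n).
  by apply: funext => x; rewrite expgS.
by apply: continuous_mulg IH => x.
Qed.

Lemma closed_Xn n : hausdorff_space G -> closed (@Xn G n).
Proof.
move=> hG; have -> : Xn n = (fun x : G => x ^+ n) @^-1` [set 1] by [].
apply: closed_comp => [x _|]; first exact: continuous_expg.
exact/accessible_closed_set1/hausdorff_accessible.
Qed.

Lemma open_left_coset (U : set G) a : open U -> open (left_coset U a).
Proof.
move=> oU.
have /continuousP := continuous_mulg (@cst_continuous G G a^-1) (fun x => cvg_id).
exact.
Qed.

Lemma open_subgroup_of_nbhs1 (H W : set G) :
  is_subgroup H -> open W -> W 1 -> W `<=` H -> open H.
Proof.
move=> [_ HM _] oW W1 WH; rewrite openE => h Hh.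
rewrite /interior nbhsE /=; exists (left_coset W h).
  by split; [exact: open_left_coset | rewrite /left_coset /= mulVg].
by move=> y /WH /(HM _ _ Hh); rewrite mulKVg.
Qed.

Lemma compact_left_coset_cover (H : set G) :
  compact [set: G] -> open_subgroup H ->
  exists s : seq G, forall g, exists2 a, a \in s & left_coset H a g.
Proof.
move=> cG [sH oH].
have := cG; rewrite compact_cover => /(_ G setT (left_coset H)) [a _|g _|D _ cov].
- exact: open_left_coset.
- by exists g => //; exact: left_coset_refl.
exists (finmap.enum_fset D) => g; have [a Da Hag] := cov g I.
by exists a.
Qed.

Lemma open_subgroup_left_transversal (H : set G) :
  compact [set: G] -> open_subgroup H ->
  exists k (r : 'I_k -> G), left_transversal H r.
Proof.
move=> cG oH; have [s scov] := compact_left_coset_cover cG oH.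
by apply: left_transversal_of_cover scov; case: oH.
Qed.

Hypotheses (cG : compact [set: G]) (hG : hausdorff_space G).
Hypothesis tdG : totally_disconnected [set: G].

Lemma open_subgroup_sub (V : set G) : open V -> V 1 ->
  exists H, open_subgroup H /\ H `<=` V.
Proof.
move=> oV V1.
have [C [[oC clC] C1 CV]] := clopen_nbhs_sub cG hG tdG oV V1.
have cC : compact C by apply: (subclosed_compact _ cG).
have [W [oW W1 CW]] :
    exists W, [/\ open W, W 1 & forall c w, C c -> W w -> C (c * w)].
  by apply: compact_tube hmul cC oC _ => c; rewrite mulg1.
pose H := [set g | forall c, C (c * g) <-> C c].
have sH : is_subgroup H.
  split => [c|g h Hg Hh c|g Hg c]; first by rewrite mulg1.
    by rewrite mulgA Hh Hg.
  by rewrite -Hg mulgKV.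
pose W' := W `&` [set w | W w^-1].
have W'H : W' `<=` H.
  move=> w [Ww Wiw] c; split => [Ccw|Cc]; last exact: CW.
  by rewrite -(mulgK w c); apply: CW.
exists H; split; last by move=> g Hg; apply: CV; rewrite -(mul1g g) Hg.
split => //; apply: (open_subgroup_of_nbhs1 sH _ _ W'H).
  by apply: openI => //; have /continuousP := hinv; exact.
by split => //=; rewrite invg1.
Qed.

Lemma open_normal_subgroup_sub (V : set G) : open V -> V 1 ->
  exists N, [/\ open N, normal_subgroup N & N `<=` V].
Proof.
move=> oV V1.
have [H [[[H1 HM HV] oH] HsubV]] := open_subgroup_sub oV V1.
have cconj : continuous (fun p : G * G => p.2 ^ p.1).
  apply: continuous_mulg.
    by move=> p; apply: continuous_comp; [exact: cvg_fst | exact: hinv].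
  by apply: continuous_mulg => p; [exact: cvg_snd | exact: cvg_fst].
have [W [oW W1 WH]] :
    exists W, [/\ open W, W 1 & forall x w, setT x -> W w -> H (w ^ x)].
  by apply: compact_tube cconj cG oH _ => x _; rewrite conj1g.
pose N := [set g | forall x, H (g ^ x)].
have sN : is_subgroup N.
  split => [x|g h Ng Nh x|g Ng x]; first by rewrite conj1g.
    by rewrite conjMg; apply: HM.
  by rewrite conjVg; apply: HV.
exists N; split.
- by apply: (open_subgroup_of_nbhs1 sN oW W1) => w Ww x; exact: WH.
- by split => // g y Ng x; rewrite -conjgM.
- by move=> g /(_ 1); rewrite conjg1 => /HsubV.
Qed.

End TopologicalGroup.

Lemma expg_mul_twisted (G : groupType) (g t : G) m :
  ((g * t) ^+ m = (\prod_(i < m) g ^ (t^-1 ^+ i)) * t ^+ m)%g.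
Proof.
elim: m => [|m IH]; first by rewrite !expg0 big_ord0 mulg1.
rewrite expgSr IH big_ord_recr /= conjgE expVgn invgK.
by rewrite [(t ^+ m.+1)%g]expgSr !mulgA mulgVK.
Qed.

Lemma cn_ratios_le1 (R : realType) n : ubound (@cn_ratios R n) 1%R.
Proof.
move=> x [[gT [phi [_ _ ->]]] _].
have gT_gt0 : (0 < #|gT|)%N by apply/card_gt0P; exists 1%g.
by rewrite ler_pdivrMr ?ltr0n // mul1r ler_nat max_card.
Qed.

Lemma Xnphi_setT (R : realType) (gT : finGroupType) n (phi : {perm gT}) (c : R) :
  phi \in Aut (setTfor gT) -> (phi ^+ n)%g = 1%g -> (c_n R n <= c)%R ->
  (c * #|gT|%:R < #|Xnphi n phi|%:R)%R -> Xnphi n phi = setTfor gT.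
Proof.
move=> phi_aut phi_n cn_c c_lt.
have gT_gt0 : (0 < #|gT|)%N by apply/card_gt0P; exists 1%g.
pose ratio : R := (#|Xnphi n phi|%:R / #|gT|%:R)%R.
have [ratio1|ratio_neq1] := eqVneq ratio 1%R.
  apply/eqP; rewrite eqEcard finset.subsetT cardsT.
  by move/divr1_eq/eqP: ratio1; rewrite eqr_nat /= => /eqP ->.
have : (ratio <= c_n R n)%R.
  apply: ub_le_sup; first by exists 1%R; exact: cn_ratios_le1.
  split; last exact/eqP.
  by exists gT, phi.
move=> /le_trans /(_ cn_c); rewrite leNgt => /negP [].
by rewrite ltr_pdivlMr ?ltr0n.
Qed.

Section CosetPermutation.
Variables (G : groupTopType) (M : set G) (k : nat) (r : 'I_k -> G).
Hypotheses (nM : normal_subgroup M) (trM : left_transversal M r).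
Local Open Scope group_scope.

Let sM : is_subgroup M. Proof. by case: nM. Qed.

Definition coset_index (g : G) : 'I_k := sval (cid (trM.1 g)).

Lemma coset_indexP g : left_coset M (r (coset_index g)) g.
Proof. exact: svalP (cid (trM.1 g)). Qed.

Lemma coset_index_eq g i : left_coset M (r i) g -> coset_index g = i.
Proof.
move=> Mig; apply: trM.2.
exact: (left_coset_trans sM (coset_indexP g) (left_coset_sym sM Mig)).
Qed.

Lemma coset_index_rep i : coset_index (r i) = i.
Proof. exact/coset_index_eq/(left_coset_refl sM). Qed.

Lemma coset_index_eqP g h : coset_index g = coset_index h <-> left_coset M g h.
Proof.
split => [Egh|Mgh].
  apply: (left_coset_trans sM (left_coset_sym sM (coset_indexP g))).
  by rewrite Egh; exact: coset_indexP.
by apply/esym/coset_index_eq; exact: (left_coset_trans sM (coset_indexP g) Mgh).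
Qed.

Lemma coset_perm_inj g : injective (fun i => coset_index (g^-1 * r i)).
Proof.
move=> i j /coset_index_eqP; rewrite left_coset_mull; exact: trM.2.
Qed.

(* Acting by [g^-1] makes [coset_perm] a morphism for the left-to-right
   composition of [{perm _}]. *)
Definition coset_perm g : {perm 'I_k} := perm (@coset_perm_inj g).

Lemma coset_permE g i : coset_perm g i = coset_index (g^-1 * r i).
Proof. by rewrite permE. Qed.

Lemma coset_permM g h : coset_perm (g * h) = coset_perm g * coset_perm h.
Proof.
apply/permP => i; rewrite permM !coset_permE; apply/coset_index_eqP.
rewrite invgM -mulgA left_coset_mull; apply: (left_coset_sym sM).
exact: coset_indexP.
Qed.

Lemma coset_perm1 : coset_perm 1 = 1.
Proof. by apply/permP => i; rewrite coset_permE perm1 invg1 mul1g coset_index_rep. Qed.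

Lemma coset_permV g : coset_perm g^-1 = (coset_perm g)^-1.
Proof. by apply: (mulgI (coset_perm g)); rewrite -coset_permM !mulgV coset_perm1. Qed.

Lemma coset_permX g m : coset_perm (g ^+ m) = coset_perm g ^+ m.
Proof.
by elim: m => [|m IH]; rewrite ?coset_perm1 // !expgS coset_permM IH.
Qed.

Lemma coset_perm_eq1 g : coset_perm g = 1 <-> M g.
Proof.
split => [g1|Mg].
  pose i := coset_index 1.
  have /coset_index_eqP : coset_index (g^-1 * r i) = coset_index (r i).
    by rewrite -coset_permE g1 perm1 coset_index_rep.
  rewrite /left_coset /= invgM invgK -mulgA => /(nM.2 _ (r i)^-1).
  by rewrite -conjgE conjgK.
apply/permP => i; rewrite coset_permE perm1; apply: coset_index_eq.
by rewrite /left_coset /= -conjgE; apply: nM.2; exact: (subgroupV sM Mg).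
Qed.

Lemma coset_perm_eq g h : coset_perm g = coset_perm h <-> left_coset M g h.
Proof.
rewrite /left_coset /= -coset_perm_eq1 coset_permM coset_permV.
split => [->|E]; first by rewrite mulVg.
by apply: (mulgI (coset_perm g)^-1); rewrite E mulVg.
Qed.

Section TwistedQuotient.
Variables (N : set G) (t : G) (n : nat).
Hypotheses (nN : normal_subgroup N) (MN : M `<=` N) (tn : t ^+ n = 1).

Let sN : is_subgroup N. Proof. by case: nN. Qed.

Definition cosets_in : {set 'I_k} := [set i | `[< N (r i) >]].

Definition twisted_cosets : {set 'I_k} :=
  [set i in cosets_in | `[< M ((r i * t) ^+ n) >]].

Lemma coset_index_in g : N g -> coset_index g \in cosets_in.
Proof.
move=> Ng; rewrite inE; apply/asboolP.
have /MN /(subgroupV sN) := coset_indexP g; rewrite invgM invgK.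
by move=> /(subgroupM sN Ng); rewrite mulKVg.
Qed.

Lemma coset_index_twisted g :
  N g -> M ((g * t) ^+ n) -> coset_index g \in twisted_cosets.
Proof.
move=> Ng Mg; rewrite inE coset_index_in //=; apply/asboolP/coset_perm_eq1.
have /coset_perm_eq Eg : left_coset M (r (coset_index g)) g by exact: coset_indexP.
by rewrite coset_permX coset_permM Eg -coset_permM -coset_permX; apply/coset_perm_eq1.
Qed.

Definition coset_perm_image : {set {perm 'I_k}} :=
  [set coset_perm (r i) | i in cosets_in].

Lemma coset_perm_imageP p :
  p \in coset_perm_image <-> exists2 g, N g & coset_perm g = p.
Proof.
split => [/imsetP [i] | [g Ng <-]].
  by rewrite inE => /asboolP Ni ->; exists (r i).
apply/imsetP; exists (coset_index g); first exact: coset_index_in.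
by apply/coset_perm_eq; exact: (left_coset_sym sM (coset_indexP g)).
Qed.

Lemma coset_perm_image_group_set : group_set coset_perm_image.
Proof.
apply/group_setP; split.
  by apply/coset_perm_imageP; exists 1; [exact: subgroup1 | exact: coset_perm1].
move=> p q /coset_perm_imageP [g Ng <-] /coset_perm_imageP [h Nh <-].
by apply/coset_perm_imageP; exists (g * h); [exact: subgroupM | exact: coset_permM].
Qed.

Definition coset_perm_group := Group coset_perm_image_group_set.

(* The finite group N/M, realised as the image of N in the permutations of
   the cosets of M. *)
Definition coset_quotient := subg_of coset_perm_group.

Local Notation tau := (coset_perm t).

Lemma coset_perm_image_conj q :
  q \in coset_perm_group -> q ^ tau^-1 \in coset_perm_group.
Proof.
move=> /coset_perm_imageP [g Ng <-]; apply/coset_perm_imageP.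
exists (g ^ t^-1); first exact: nN.2.
by rewrite !conjgE !invgK !coset_permM coset_permV.
Qed.

Definition twist_fun (x : coset_quotient) : coset_quotient :=
  subg coset_perm_group (sgval x ^ tau^-1).

Lemma sgval_twist_fun x : sgval (twist_fun x) = sgval x ^ tau^-1.
Proof. by rewrite /twist_fun subgK // coset_perm_image_conj // subgP. Qed.

Lemma twist_fun_inj : injective twist_fun.
Proof.
move=> x y /(congr1 sgval); rewrite !sgval_twist_fun => /conjg_inj.
exact: subg_inj.
Qed.

Definition twist : {perm coset_quotient} := perm twist_fun_inj.

Lemma sgval_twistX m x : sgval ((twist ^+ m) x) = sgval x ^ tau^-1 ^+ m.
Proof.
elim: m x => [|m IH] x; first by rewrite !expg0 perm1 conjg1.
by rewrite expgSr permM permE sgval_twist_fun IH expgSr conjgM.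
Qed.

Lemma twist_Aut : twist \in Aut (setTfor coset_quotient).
Proof.
rewrite inE; apply/andP; split; first by apply/fintype.subsetP => x _; rewrite inE.
apply/morphicP => x y _ _; apply: subg_inj.
by rewrite !permE sgvalM ?inE // !sgval_twist_fun sgvalM ?inE // conjMg.
Qed.

Lemma twist_order : twist ^+ n = 1.
Proof.
apply/permP => x; rewrite perm1; apply: subg_inj.
by rewrite sgval_twistX expgVn -coset_permX tn coset_perm1 invg1 conjg1.
Qed.

Lemma twist_Xnphi g : N g ->
  (subg coset_perm_group (coset_perm g) \in Xnphi n twist) = `[< M ((g * t) ^+ n) >].
Proof.
move=> Ng.
have Gg : coset_perm g \in coset_perm_group by apply/coset_perm_imageP; exists g.
rewrite inE -(inj_eq (@subg_inj _ coset_perm_group)).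
rewrite (big_morph sgval (fun _ _ => erefl) erefl) /=.
under eq_bigr => i _ do rewrite sgval_twistX subgK //.
have -> : \prod_(i < n) coset_perm g ^ tau^-1 ^+ i = coset_perm ((g * t) ^+ n).
  by rewrite coset_permX coset_permM expg_mul_twisted -coset_permX tn coset_perm1 mulg1.
by apply/eqP/asboolP => /coset_perm_eq1.
Qed.

Definition coset_quotient_rep (i : 'I_k) : coset_quotient :=
  subg coset_perm_group (coset_perm (r i)).

Lemma coset_quotient_rep_inj : {in cosets_in &, injective coset_quotient_rep}.
Proof.
move=> i j Ni Nj /(congr1 sgval); rewrite !subgK ?imset_f //.
by move=> /coset_perm_eq; apply: trM.2.
Qed.

Lemma coset_quotient_repP (x : coset_quotient) :
  exists2 i, i \in cosets_in & x = coset_quotient_rep i.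
Proof.
have /imsetP [i Ni ex] := subgP x.
by exists i => //; rewrite /coset_quotient_rep -ex sgvalK.
Qed.

Lemma card_coset_quotient : #|coset_quotient| = #|cosets_in|.
Proof.
rewrite -(card_in_imset coset_quotient_rep_inj); apply: eq_card => x.
rewrite inE; apply/esym/imsetP.
by have [i Ni ->] := coset_quotient_repP x; exists i.
Qed.

Lemma card_Xnphi_twist : #|Xnphi n twist| = #|twisted_cosets|.
Proof.
have S_in : {subset twisted_cosets <= cosets_in}.
  by move=> i; rewrite inE => /andP [].
rewrite -(card_in_imset (sub_in2 S_in coset_quotient_rep_inj)).
apply: eq_card => x.
have [i Ni ->] := coset_quotient_repP x.
have Nri : N (r i) by move: Ni; rewrite inE => /asboolP.
rewrite [in LHS]/coset_quotient_rep twist_Xnphi //.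
apply/asboolP/imsetP => [Mi|[j Sj eij]].
  by exists i => //; rewrite inE Ni; exact/asboolP.
rewrite (coset_quotient_rep_inj Ni (S_in _ Sj) eij).
by move: Sj; rewrite inE => /andP [_ /asboolP].
Qed.

Lemma twisted_cosets_torsion (R : realType) (c : R) : (c_n R n <= c)%R ->
  (c * #|cosets_in|%:R < #|twisted_cosets|%:R)%R ->
  forall g, N g -> M ((g * t) ^+ n).
Proof.
move=> cn_c c_lt g Ng.
have := Xnphi_setT twist_Aut twist_order cn_c.
rewrite card_coset_quotient card_Xnphi_twist => /(_ c_lt) Xfull.
by apply/asboolP; rewrite -twist_Xnphi // Xfull inE.
Qed.

End TwistedQuotient.

End CosetPermutation.

Lemma in_bigsetU_ord (T : Type) k (P : pred 'I_k) (F : 'I_k -> set T) y :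
  (\big[setU/set0]_(i < k | P i) F i) y <-> exists2 i, P i & F i y.
Proof.
rewrite -bigcup_seq_cond.
split => [[i /andP [_ Pi] Fi]|[i Pi Fi]]; first by exists i.
by exists i => //; rewrite /= mem_index_enum.
Qed.

Section Haar.
Variables (R : realType) (G : groupTopType) (mu : measure (borelG G) R).
Hypothesis hmu : normalized_haar_measure mu.
Local Open Scope ring_scope.

Lemma measurable_open (A : set G) : open A -> measurable (A : set (borelG G)).
Proof. by move=> oA; apply: sub_sigma_algebra. Qed.

Lemma haarE (A : set G) :
  measurable (A : set (borelG G)) -> mu A = (fine (mu A))%:E.
Proof.
move=> mA; rewrite fineK // ge0_fin_numE //.
apply: (@le_lt_trans _ _ 1%E); last exact: ltry.
by case: hmu => <- _ _ _; apply: le_measure; rewrite ?inE.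
Qed.

Lemma haar_left_coset (A : set G) g : measurable (A : set (borelG G)) ->
  mu (left_coset A g) = mu A.
Proof.
move=> mA; case: hmu => _ hinv _ _; rewrite -(hinv g A mA); congr (mu _).
apply/seteqP; split => y; first by move=> Ay; exists (g^-1 * y)%g; rewrite ?mulKVg.
by move=> [x Ax <-]; rewrite /left_coset /= mulKg.
Qed.

Lemma haar_outer_open (A : set G) (e : R) : measurable (A : set (borelG G)) ->
  (mu A < e%:E)%E -> exists2 U, open U /\ A `<=` U & fine (mu U) < e.
Proof.
move=> mA; case: hmu => _ _ /(_ A mA) -> _ /ereal_inf_lt [_ [U [oU AU] <-]].
by rewrite haarE ?lte_fin; [exists U | exact: measurable_open].
Qed.

Lemma haar_outer_open_mul (A : set G) (c : R) : measurable (A : set (borelG G)) ->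
  (0 < mu A)%E -> 0 < c < 1 ->
  exists2 U, open U /\ A `<=` U & c * fine (mu U) < fine (mu A).
Proof.
move=> mA A_gt0 /andP [c_gt0 c_lt1].
have mA_gt0 : 0 < fine (mu A) by rewrite -lte_fin -haarE.
have : (mu A < (fine (mu A) / c)%:E)%E.
  by rewrite haarE // lte_fin ltr_pdivlMr // gtr_pMr.
move=> /(haar_outer_open mA) [U oAU Uc].
by exists U => //; rewrite mulrC -ltr_pdivlMr.
Qed.

Hypothesis hmul : continuous (fun p : G * G => (p.1 * p.2)%g).

Lemma haar_left_cosets (H : set G) k (a : 'I_k -> G) (P : pred 'I_k) :
  open H -> trivIset setT (fun i => left_coset H (a i)) ->
  mu (\big[setU/set0]_(i < k | P i) left_coset H (a i)) =
  (#|P|%:R * fine (mu H))%:E.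
Proof.
move=> oH tH; rewrite measure_bigsetU_ord //; last first.
  by move=> i; apply: measurable_open; exact: open_left_coset.
rewrite (eq_bigr (fun=> (fine (mu H))%:E)); last first.
  by move=> i _; rewrite /= haar_left_coset; [apply: haarE|]; exact: measurable_open.
by rewrite sumEFin sumr_const mulr_natl.
Qed.

Lemma measurable_Xn n : hausdorff_space G -> measurable (@Xn G n : set (borelG G)).
Proof.
move=> hG; rewrite -[Xn n]setCK; apply: measurableC; apply: measurable_open.
exact/closed_openC/closed_Xn.
Qed.

Lemma haar_partition (N X : set G) k (s : 'I_k -> G) :
  open_subgroup N -> left_transversal N s -> measurable (X : set (borelG G)) ->
  fine (mu X) = \sum_(i < k) fine (mu (X `&` left_coset N (s i))).
Proof.
move=> [sN oN] trN mX.
have mXN i : measurable (X `&` left_coset N (s i) : set (borelG G)).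
  by apply: measurableI => //; apply: measurable_open; exact: open_left_coset.
have tXN : trivIset setT (fun i => X `&` left_coset N (s i)).
  move=> i j _ _ [y [[_ Niy] [_ Njy]]].
  by apply: (left_transversal_disjoint sN trN) => //; exists y.
apply: EFin_inj; rewrite -haarE // -sumEFin.
rewrite (eq_bigr (fun i => mu (X `&` left_coset N (s i)))); last first.
  by move=> i _; rewrite -haarE.
rewrite -measure_bigsetU_ord //; congr (mu _); apply/seteqP; split => y.
  by move=> Xy; apply/in_bigsetU_ord; have [i Niy] := trN.1 y; exists i.
by move=> /in_bigsetU_ord [i _ []].
Qed.

Lemma exists_dense_left_coset (N X U : set G) (c : R) :
  compact [set: G] -> open_subgroup N -> measurable (X : set (borelG G)) ->
  open U -> (forall x h, X x -> N h -> U (x * h)%g) ->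
  0 <= c -> c * fine (mu U) < fine (mu X) ->
  exists2 t, X t & c * fine (mu N) < fine (mu (X `&` left_coset N t)).
Proof.
move=> cG oN mX oU XNU c0 cUX.
have [k [s trN]] := open_subgroup_left_transversal hmul cG oN.
have [sN oN'] := oN.
pose A i := X `&` left_coset N (s i).
suff [i Ai] : exists i, c * fine (mu N) < fine (mu (A i)).
  have [t [Xt Nit]] : A i !=set0.
    apply/set0P/negP => /eqP A0; move: Ai; rewrite A0 measure0 /= ltNge.
    by rewrite mulr_ge0 // fine_ge0.
  by exists t; rewrite // -(left_coset_eq sN Nit).
apply: contrapT => /forallNP small.
have {}small i : fine (mu (A i)) <= c * fine (mu N).
  by rewrite leNgt; apply/negP; exact: small.
pose J := [pred i | `[< A i !=set0 >]].
have XJ : fine (mu X) <= c * (#|J|%:R * fine (mu N)).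
  rewrite (haar_partition oN trN mX) (bigID J) /= [X in _ + X]big1 ?addr0 => [|i].
    apply: (le_trans (ler_sum _ (fun i _ => small i))).
    by rewrite sumr_const mulrCA mulr_natl.
  by move=> /asboolPn /nonemptyPn; rewrite /A => ->; rewrite measure0.
have JU : #|J|%:R * fine (mu N) <= fine (mu U).
  rewrite -lee_fin -(@haar_left_cosets N k s J oN'); last first.
    exact: left_transversal_disjoint trN.
  rewrite -haarE; last exact: measurable_open.
  apply: le_measure; rewrite ?inE.
  - apply: bigsetU_measurable => i _; apply: measurable_open; exact: open_left_coset.
  - exact: measurable_open.
  move=> z /in_bigsetU_ord [i /asboolP [y [Xy Niy]] Niz].
  rewrite -(mulKVg y z); apply: XNU => //.
  by move: Niz; rewrite (left_coset_eq sN Niy).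
have : fine (mu X) < fine (mu X).
  by apply: (le_lt_trans XJ); apply: le_lt_trans cUX; rewrite ler_wpM2l.
by rewrite ltxx.
Qed.

Section Counting.
Variables (M N : set G) (k : nat) (r : 'I_k -> G) (t : G) (n : nat).
Hypotheses (oM : open M) (nM : normal_subgroup M) (trM : left_transversal M r).
Hypotheses (oN : open N) (nN : normal_subgroup N) (MN : M `<=` N).

Lemma haar_cosets_in_le : #|cosets_in r N|%:R * fine (mu M) <= fine (mu N).
Proof.
have tM := left_transversal_disjoint nM.1 trM.
rewrite -lee_fin -(@haar_left_cosets M k r (fun i => i \in cosets_in r N) oM tM).
rewrite -haarE; last exact: measurable_open.
apply: le_measure; rewrite ?inE.
- by apply: bigsetU_measurable => i _; apply: measurable_open; exact: open_left_coset.
- exact: measurable_open.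
move=> z /in_bigsetU_ord [i]; rewrite inE => /asboolP Ni /MN Niz.
by rewrite -(mulKVg (r i) z); apply: (subgroupM nN.1).
Qed.

Lemma haar_Xn_coset_le : hausdorff_space G ->
  fine (mu (Xn n `&` left_coset N t)) <=
  #|twisted_cosets M r N t n|%:R * fine (mu M).
Proof.
move=> hG.
have tMt := left_transversal_disjoint nM.1 (left_transversal_mulr t nM.2 trM).
have mXN : measurable (Xn n `&` left_coset N t : set (borelG G)).
  apply: measurableI; first exact: measurable_Xn.
  by apply: measurable_open; exact: open_left_coset.
rewrite -lee_fin -haarE // -(@haar_left_cosets M k _
  (fun i => i \in twisted_cosets M r N t n) oM tMt).
apply: le_measure; rewrite ?inE //.
  by apply: bigsetU_measurable => i _; apply: measurable_open; exact: open_left_coset.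
move=> y [Xy Nty]; apply/in_bigsetU_ord.
have Nyt : N (y * t^-1)%g.
  by move: (nN.2 _ t^-1%g Nty); rewrite conjgE invgK !mulgA mulgV mul1g.
exists (coset_index trM (y * t^-1)%g).
  apply: (coset_index_twisted nM trM nN MN Nyt).
  by rewrite mulgVK Xy; exact: subgroup1 nM.1.
move: (nM.2 _ t (coset_indexP trM (y * t^-1)%g)).
by rewrite /left_coset /= conjgE invgM !mulgA mulgVK.
Qed.

End Counting.

Hypothesis hinv : continuous (fun x : G => x^-1%g).
Hypotheses (cG : compact [set: G]) (hG : hausdorff_space G).
Hypothesis tdG : totally_disconnected [set: G].

Lemma dense_left_coset_torsion (N : set G) (t : G) (n : nat) (c : R) :
  open N -> normal_subgroup N -> (t ^+ n = 1)%g -> 0 <= c -> c_n R n <= c ->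
  c * fine (mu N) < fine (mu (Xn n `&` left_coset N t)) ->
  forall h, N h -> ((t * h) ^+ n = 1)%g.
Proof.
move=> oN nN tn c0 cn_c dense h Nh; apply: contrapT => xn1.
pose V := ~` [set ((t * h) ^+ n)%g] `&` N.
have oV : open V.
  apply: openI => //; apply: closed_openC.
  exact/accessible_closed_set1/hausdorff_accessible.
have V1 : V 1%g by split; [exact: nesym | exact: subgroup1 nN.1].
have [M [oM nM MV]] := open_normal_subgroup_sub hmul hinv cG hG tdG oV V1.
have MN : M `<=` N by move=> g /MV [].
have [k [r trM]] := open_subgroup_left_transversal hmul cG (conj nM.1 oM).
have count : c * #|cosets_in r N|%:R < #|twisted_cosets M r N t n|%:R.
  have le1 := haar_cosets_in_le oM nM trM oN nN MN.
  have le2 := haar_Xn_coset_le t n oM nM trM oN nN MN hG.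
  have mM0 : 0 <= fine (mu M) by apply: fine_ge0.
  (* c #|cosets_in| mu(M) <= c mu(N) < mu(X ∩ tN) <= #|twisted_cosets| mu(M) *)
  nra.
have := twisted_cosets_torsion nM trM nN MN tn cn_c count (nN.2 _ t^-1%g Nh).
by rewrite conjgE invgK !mulgA mulgVK => /MV [/(_ erefl)].
Qed.

End Haar.

Theorem proposition2p6 (R : realType) (n : nat) (n_pos : (0 < n)%N)
  (hcn : (c_n R n < 1)%R)
  (G : groupTopType) (hG : profinite_group G)
  (mu : measure (borelG G) R)
  (hmu : normalized_haar_measure mu)
  (hX : (0 < mu (@Xn G n))%E) :
  exists (H : set G) (t : G),
    open_subgroup H /\ (forall h, H h -> ((t * h) ^+ n)%g = 1%g).
Proof.
case: hG => [[hmul hinv] cG hH tdG].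
pose c : R := Num.max (c_n R n) 2^-1%R.
have cn_c : (c_n R n <= c)%R by rewrite le_max lexx.
have c_gt0 : (0 < c)%R by rewrite lt_max invr_gt0 ltr0n orbT.
have c01 : (0 < c < 1)%R by rewrite c_gt0 gt_max hcn /= invf_lt1 // ltr1n.
have mX := measurable_Xn hmul n hH.
have [U [oU XU] cUX] := haar_outer_open_mul hmu mX hX c01.
have cX : compact (@Xn G n) by apply: (subclosed_compact _ cG) => //; exact: closed_Xn.
have [V [oV V1 XVU]] :
    exists V, [/\ open V, V 1%g & forall x v, Xn n x -> V v -> U (x * v)%g].
  by apply: compact_tube hmul cX oU _ => x Xx; rewrite mulg1; exact: XU.
have [N [oN nN NV]] := open_normal_subgroup_sub hmul hinv cG hH tdG oV V1.
have [t Xt dense] := exists_dense_left_coset hmu hmul cG (conj nN.1 oN) mX oU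
  (fun x h Xx Nh => XVU x h Xx (NV h Nh)) (ltW c_gt0) cUX.
exists N, t; split; first by split; [exact: nN.1 |].
exact: (dense_left_coset_torsion hmu hmul hinv cG hH tdG oN nN Xt (ltW c_gt0) cn_c dense).
Qed.
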